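(* Let $M\ge1$. Suppose the enumeration $x_{1:\infty}$ is an $M$-bounded displacement enumeration with respect to a language $L$. Then for every language $L'\subseteq L$, $x_{1:\infty}$ is an $M$-bounded displacement enumeration with respect to $L'$.
   Context: The universe is $U=\mathbb{N}$ with its natural order; a language is an infinite subset of $U$, and its canonical enumeration is its elements listed in increasing order $\ell_1<\ell_2<\cdots$. For a language $L$ with canonical enumeration $\ell_1,\ell_2,\dots$ and $x\in U$, let $\sigma(x,L)=j$ if $x=\ell_j$ and $\sigma(x,L)=0$ if $x\notin L$. An enumeration $x_1,x_2,\dots$ (any sequence of elements of $U$) is an $M$-bounded displacement enumeration with respect to $L$ if there is $n^\star$ such that $\sigma(x_n,L)\le Mn$ for all $n\ge n^\star$. *)

From mathcomp Require Import all_boot.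
From Stdlib Require Import Reals.
Set Implicit Arguments. Unset Strict Implicit. Unset Printing Implicit Defensive.

Definition language (L : pred nat) : Prop :=
  forall n : nat, exists m : nat, (n <= m)%N /\ L m.

(* sigma x L = j if x is the j-th element (1-indexed) of L in increasing
   order, 0 if x \notin L.  The position of x in L is the number of
   elements of L that are <= x. *)
Definition sigma (x : nat) (L : pred nat) : nat :=
  if L x then count L (iota 0 x.+1) else 0.

(* x : nat -> nat is indexed from 1 (x 0 is unused). *)
Definition bounded_displacement (M : R) (x : nat -> nat) (L : pred nat) : Prop :=
  exists nstar : nat, forall n : nat, (nstar <= n)%N -> (1 <= n)%N ->
    (INR (sigma (x n) L) <= M * INR n)%R.

From Pilot Require Import Defs.
From mathcomp Require Import all_boot.
From Stdlib Require Import Reals.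

(* Qualified because Reals also exports a [sigma] (finite sums). *)
Lemma leq_sigma_sub (L L' : pred nat) (y : nat) :
  {subset L' <= L} -> (Defs.sigma y L' <= Defs.sigma y L)%N.
Proof.
move=> subL'L; rewrite /Defs.sigma.
case L'y: (L' y) => //.
have -> : L y by exact: subL'L.
exact: sub_count.
Qed.

Lemma bounded_displacement_sub (M : R) (x : nat -> nat) (L L' : pred nat) :
  {subset L' <= L} -> bounded_displacement M x L -> bounded_displacement M x L'.
Proof.
move=> subL'L [nstar bdL]; exists nstar => n n_ge n_gt0.
apply: Rle_trans (bdL n n_ge n_gt0).
by apply/le_INR/leP/leq_sigma_sub.
Qed.

Theorem proposition7p5 (M : R) (x : nat -> nat) (L : pred nat) :
  (1 <= M)%R -> language L -> bounded_displacement M x L ->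
  forall L' : pred nat, language L' -> {subset L' <= L} ->
    bounded_displacement M x L'.
Proof.
move=> _ _ bdL L' _ subL'L.
exact: bounded_displacement_sub subL'L bdL.
Qed.
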